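(* Let $n>0$, $m\ge 0$, let $a_1,\dots,a_n$ be atoms and $l_1,\dots,l_m$ literals (atoms or negated atoms $\neg a$). Then the formula $l_1\wedge\cdots\wedge l_m\to a_1\vee\cdots\vee a_n$ is strongly equivalent to the set of the $n$ formulas, for $i=1,\dots,n$, $$(l_1\wedge\cdots\wedge l_m\wedge(a_1\to a_i)\wedge\cdots\wedge(a_n\to a_i))\to a_i.$$
   Context: Formulas are built from atoms and $\bot$ using $\wedge,\vee,\to$ ($\top:=\bot\to\bot$, $\neg F:=F\to\bot$); an empty conjunction is $\top$. Reduct: $\bot^X=\bot$; $a^X=a$ if $a\in X$, else $\bot$; $(F\otimes G)^X=F^X\otimes G^X$ if $X\models F\otimes G$, else $\bot$; $\Gamma^X=\{F^X:F\in\Gamma\}$. $X$ is a stable model of $\Gamma$ if $X\models\Gamma^X$ and no proper subset of $X$ satisfies $\Gamma^X$. Theories $\Gamma_1,\Gamma_2$ are strongly equivalent if for every theory $\Gamma$, $\Gamma_1\cup\Gamma$ and $\Gamma_2\cup\Gamma$ have the same stable models. *)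

From Stdlib Require Import List Classical ClassicalEpsilon.
Import ListNotations.
Set Implicit Arguments.

Section Logic.
Variable A : Type.

Inductive form : Type :=
| Atom : A -> form
| Bot : form
| And : form -> form -> form
| Or : form -> form -> form
| Imp : form -> form -> form.

Definition Top : form := Imp Bot Bot.
Definition Neg (F : form) : form := Imp F Bot.

Definition interp := A -> Prop.
Definition theory := form -> Prop.

Fixpoint sat (X : interp) (F : form) : Prop :=
  match F with
  | Atom a => X a
  | Bot => False
  | And F G => sat X F /\ sat X G
  | Or F G => sat X F \/ sat X G
  | Imp F G => sat X F -> sat X G
  end.

Definition satT (X : interp) (G : theory) : Prop := forall F, G F -> sat X F.

Definition decP (P : Prop) : {P} + {~ P} := excluded_middle_informative P.

Fixpoint reduct (X : interp) (F : form) : form :=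
  match F with
  | Atom a => if decP (X a) then Atom a else Bot
  | Bot => Bot
  | And F1 F2 => if decP (sat X (And F1 F2)) then And (reduct X F1) (reduct X F2) else Bot
  | Or F1 F2 => if decP (sat X (Or F1 F2)) then Or (reduct X F1) (reduct X F2) else Bot
  | Imp F1 F2 => if decP (sat X (Imp F1 F2)) then Imp (reduct X F1) (reduct X F2) else Bot
  end.

Definition reductT (X : interp) (G : theory) : theory :=
  fun H => exists F, G F /\ H = reduct X F.

Definition proper_subset (Y X : interp) : Prop :=
  (forall a, Y a -> X a) /\ exists a, X a /\ ~ Y a.

Definition stable_model (X : interp) (G : theory) : Prop :=
  satT X (reductT X G) /\ ~ (exists Y, proper_subset Y X /\ satT Y (reductT X G)).

Definition unionT (G1 G2 : theory) : theory := fun F => G1 F \/ G2 F.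

Definition strongly_equivalent (G1 G2 : theory) : Prop :=
  forall G : theory, forall X : interp,
    stable_model X (unionT G1 G) <-> stable_model X (unionT G2 G).

Inductive literal : Type :=
| PosLit : A -> literal
| NegLit : A -> literal.

Definition lit_form (l : literal) : form :=
  match l with PosLit a => Atom a | NegLit a => Neg (Atom a) end.

Fixpoint bigAnd (l : list form) : form :=
  match l with
  | [] => Top
  | [F] => F
  | F :: r => And F (bigAnd r)
  end.

(* F1 \/ ... \/ Fk  (only used for k > 0; empty disjunction is Bot) *)
Fixpoint bigOr (l : list form) : form :=
  match l with
  | [] => Bot
  | [F] => F
  | F :: r => Or F (bigOr r)
  end.

End Logic.

Arguments Bot {A}.
Arguments Top {A}.

From Stdlib Require Import List Classical Setoid.
Import ListNotations.

(* We use the logic of here-and-there: an HT-interpretation is a pair (Y, X) of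
   sets of atoms with Y ⊆ X, and [ht Y X F] is satisfaction of F at the "here"
   world Y, implications being checked at both worlds.  The reduct is a syntactic
   encoding of this semantics ([reduct_ht]), so two theories satisfied by the same
   HT-interpretations are strongly equivalent ([ht_equiv_strongly_equivalent]).
   It therefore suffices to compare HT-models.  Computing the HT-semantics of
   big conjunctions and disjunctions, the disjunctive rule and the family of
   shifted rules unfold to two statements about an arbitrary rule body and two
   predicates Y, X on a nonempty list of atoms; their equivalence
   ([disjunction_shift_equiv]) is a purely classical fact built on
   [exists_iff_shifted]: "some a_j holds" iff "for each i, if every a_j implies
   a_i then a_i holds".  Literals play no special role: the theorem holds for
   an arbitrary list of body formulas. *)

Section HereThere.
Context {A : Type}.

Fixpoint ht (Y X : interp A) (F : form A) : Prop :=
  match F with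
  | Atom a => Y a
  | Bot => False
  | And F G => ht Y X F /\ ht Y X G
  | Or F G => ht Y X F \/ ht Y X G
  | Imp F G => (ht Y X F -> ht Y X G) /\ (sat X F -> sat X G)
  end.

Definition htT (Y X : interp A) (G : theory A) : Prop := forall F, G F -> ht Y X F.

Definition included (Y X : interp A) : Prop := forall a, Y a -> X a.

Lemma ht_persistent (Y X : interp A) (F : form A) :
  included Y X -> ht Y X F -> sat X F.
Proof. intros HYX; induction F; simpl; firstorder. Qed.

Lemma ht_total (X : interp A) (F : form A) : ht X X F <-> sat X F.
Proof. induction F; simpl; firstorder. Qed.

Lemma reduct_ht (Y X : interp A) (F : form A) :
  included Y X -> (sat Y (reduct X F) <-> ht Y X F).
Proof.
  intros HYX; induction F; simpl.
  - destruct (decP (X a)); simpl; firstorder.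
  - tauto.
  - destruct (decP _) as [HX | HnX]; simpl.
    + rewrite IHF1, IHF2; tauto.
    + split; [tauto |]. intros [H1 H2].
      apply HnX; split; eapply ht_persistent; eauto.
  - destruct (decP _) as [HX | HnX]; simpl.
    + rewrite IHF1, IHF2; tauto.
    + split; [tauto |]. intros [H1 | H2]; apply HnX;
        [left | right]; eapply ht_persistent; eauto.
  - destruct (decP _); simpl.
    + rewrite IHF1, IHF2; tauto.
    + tauto.
Qed.

Lemma reductT_htT (Y X : interp A) (G : theory A) :
  included Y X -> (satT Y (reductT X G) <-> htT Y X G).
Proof.
  intros HYX; unfold satT, reductT, htT; split.
  - intros H F HF. apply (reduct_ht Y X F HYX). apply H. eauto.
  - intros H F' [F [HF ->]]. apply (reduct_ht Y X F HYX). auto.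
Qed.

(* Theories with the same HT-models are strongly equivalent: the stable models
   of G ∪ Γ are determined by the HT-models of G ∪ Γ with a fixed there-world. *)
Lemma ht_equiv_strongly_equivalent (G1 G2 : theory A) :
  (forall Y X, included Y X -> (htT Y X G1 <-> htT Y X G2)) ->
  strongly_equivalent G1 G2.
Proof.
  intros Hequiv G X.
  assert (Hunion : forall G0 Y, included Y X ->
            (satT Y (reductT X (unionT G0 G)) <-> htT Y X G0 /\ htT Y X G)).
  { intros G0 Y HYX. rewrite reductT_htT by exact HYX. unfold htT, unionT. firstorder. }
  assert (HXX : included X X) by (intros a Ha; exact Ha).
  unfold stable_model, proper_subset.
  rewrite (Hunion G1 X HXX), (Hunion G2 X HXX), (Hequiv X X HXX).
  split; intros [Hmodel Hmin]; split; auto;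
    intros [Y [[HYX Hproper] HY]]; apply Hmin; exists Y;
    rewrite Hunion, Hequiv in * by exact HYX; auto.
Qed.

Lemma ht_bigAnd (Y X : interp A) (L : list (form A)) :
  ht Y X (bigAnd L) <-> Forall (ht Y X) L.
Proof.
  induction L as [| F [| G L] IH].
  - simpl; split; [constructor | tauto].
  - simpl; split; [auto | intros H; inversion H; auto].
  - change (ht Y X F /\ ht Y X (bigAnd (G :: L)) <-> Forall (ht Y X) (F :: G :: L)).
    rewrite IH; split; [intros []; constructor; auto | intros H; inversion H; auto].
Qed.

Lemma ht_bigOr (Y X : interp A) (L : list (form A)) :
  ht Y X (bigOr L) <-> Exists (ht Y X) L.
Proof.
  induction L as [| F [| G L] IH].
  - simpl; split; [tauto | intros H; inversion H].
  - simpl; split; [auto | intros H; inversion H as [? ? HF | ? ? HL]; auto; inversion HL].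
  - change (ht Y X F \/ ht Y X (bigOr (G :: L)) <-> Exists (ht Y X) (F :: G :: L)).
    rewrite IH; split; [intros []; auto | intros H; inversion H; auto].
Qed.

Lemma sat_bigAnd (X : interp A) (L : list (form A)) :
  sat X (bigAnd L) <-> Forall (sat X) L.
Proof.
  rewrite <- ht_total, ht_bigAnd.
  split; apply Forall_impl; intros F; apply ht_total.
Qed.

Lemma sat_bigOr (X : interp A) (L : list (form A)) :
  sat X (bigOr L) <-> Exists (sat X) L.
Proof.
  rewrite <- ht_total, ht_bigOr.
  split; apply Exists_impl; intros F; apply ht_total.
Qed.

Lemma ht_disjunctive_rule (Y X : interp A) (body : list (form A)) (L : list A) :
  ht Y X (Imp (bigAnd body) (bigOr (map (@Atom A) L))) <->
  (ht Y X (bigAnd body) -> exists a, In a L /\ Y a) /\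
  (sat X (bigAnd body) -> exists a, In a L /\ X a).
Proof.
  simpl. rewrite ht_bigOr, sat_bigOr, !Exists_map, !Exists_exists. tauto.
Qed.

Definition shifted_rule (body : list (form A)) (L : list A) (ai : A) : form A :=
  Imp (bigAnd (body ++ map (fun aj => Imp (Atom aj) (Atom ai)) L)) (Atom ai).

Lemma ht_shifted_rule (Y X : interp A) (body : list (form A)) (L : list A) (ai : A) :
  ht Y X (shifted_rule body L ai) <->
  ((ht Y X (bigAnd body) /\
      (forall aj, In aj L -> (Y aj -> Y ai) /\ (X aj -> X ai))) -> Y ai) /\
  ((sat X (bigAnd body) /\ (forall aj, In aj L -> X aj -> X ai)) -> X ai).
Proof.
  unfold shifted_rule; simpl.
  rewrite ht_bigAnd, sat_bigAnd, ht_bigAnd, sat_bigAnd,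
    !Forall_app, !Forall_map, !Forall_forall.
  simpl. tauto.
Qed.

End HereThere.

Section Shifting.
Context {A : Type}.

Lemma exists_iff_shifted (L : list A) (Z : A -> Prop) :
  L <> [] ->
  (exists a, In a L /\ Z a) <->
  (forall ai, In ai L -> (forall aj, In aj L -> Z aj -> Z ai) -> Z ai).
Proof.
  intros Hne; split.
  - intros [a [Ha HZa]] ai _ Hto. exact (Hto a Ha HZa).
  - intros Hshift. apply NNPP; intros Hnone.
    destruct L as [| a0 L]; [congruence |].
    apply Hnone; exists a0; split; [left; reflexivity |].
    apply Hshift; [left; reflexivity |].
    intros aj Haj HZ. exfalso; eauto.
Qed.

(* The HT-level equivalence behind the theorem, for an abstract body whose
   truth here ([H]) implies its truth there ([T]). *)
Lemma disjunction_shift_equiv (L : list A) (Y X : A -> Prop) (H T : Prop) :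
  L <> [] -> (H -> T) ->
  ((H -> exists a, In a L /\ Y a) /\ (T -> exists a, In a L /\ X a)) <->
  (forall ai, In ai L ->
     ((H /\ (forall aj, In aj L -> (Y aj -> Y ai) /\ (X aj -> X ai))) -> Y ai) /\
     ((T /\ (forall aj, In aj L -> X aj -> X ai)) -> X ai)).
Proof.
  intros Hne HT.
  rewrite (exists_iff_shifted L X Hne).
  split.
  - intros [Hhere Hthere] ai Hai; split.
    + intros [HH Himp]. destruct (Hhere HH) as [a [Ha HYa]].
      exact (proj1 (Himp a Ha) HYa).
    + intros [HTb Himp]. exact (Hthere HTb ai Hai Himp).
  - intros Hrules.
    assert (Hthere : T -> forall ai, In ai L ->
              (forall aj, In aj L -> X aj -> X ai) -> X ai)
      by (intros HTb ai Hai Himp; exact (proj2 (Hrules ai Hai) (conj HTb Himp))).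
    split; [| exact Hthere].
    intros HH. apply NNPP; intros Hnone.
    assert (HX : exists a, In a L /\ X a)
      by (apply (exists_iff_shifted L X Hne); exact (Hthere (HT HH))).
    destruct HX as [a [Ha HXa]].
    apply Hnone; exists a; split; [exact Ha |].
    apply (proj1 (Hrules a Ha)); split; [exact HH |].
    intros aj Haj; split; [intros HYaj; exfalso; eauto | intros _; exact HXa].
Qed.

End Shifting.

Theorem lemma1 (A : Type) (as_ : list A) (ls : list (literal A)) :
  as_ <> [] ->
  strongly_equivalent
    (fun F => F = Imp (bigAnd (map (@lit_form A) ls)) (bigOr (map (@Atom A) as_)))
    (fun F => exists ai, In ai as_ /\
       F = Imp (bigAnd (map (@lit_form A) ls ++ map (fun aj => Imp (Atom aj) (Atom ai)) as_))
               (Atom ai)).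
Proof.
  intros Hne. apply ht_equiv_strongly_equivalent. intros Y X HYX.
  set (body := map (@lit_form A) ls).
  assert (Hrule : htT Y X (fun F => F = Imp (bigAnd body) (bigOr (map (@Atom A) as_))) <->
                  ht Y X (Imp (bigAnd body) (bigOr (map (@Atom A) as_))))
    by (unfold htT; split; [auto | intros H F ->; exact H]).
  assert (Hfamily : htT Y X (fun F => exists ai, In ai as_ /\ F = shifted_rule body as_ ai) <->
                    forall ai, In ai as_ -> ht Y X (shifted_rule body as_ ai))
    by (unfold htT; split; [eauto | intros H F [ai [Hai ->]]; auto]).
  rewrite Hrule, Hfamily, ht_disjunctive_rule.
  setoid_rewrite ht_shifted_rule.
  apply disjunction_shift_equiv; [exact Hne | apply ht_persistent; exact HYX].
Qed.
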